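(* Let $\Gamma \leq F_d$ be a finitely generated subgroup. Let $g \in F_d$ be an admissible connector for $\mathrm{C}(\Gamma)$ with itself, and let $J$ be the length of the join segment of $g$. Let $\Gamma' := \langle \Gamma, g\Gamma g^{-1}\rangle$. Then for every $R \in \mathbb N$, \[ c_{\Gamma'}(R) \leq \sum_{i=0}^{\lfloor R/(2J) \rfloor} \ \sum_{\substack{\alpha=(\alpha_0,\dots,\alpha_{2i}) \in \mathbb N^{2i+1} \\ \sum_j \alpha_j = R + 2i(|g| - 2J)}} \ \prod_{j=0}^{2i} c_\Gamma(\alpha_j). \]
   Context: $F_d$ is free on $a_1,\dots,a_d$; $|g|$ is the reduced word length, and for $H\le F_d$, $c_H(R) = |\{h\in H \mid |h|\le R\}|$. The Schreier graph $\mathrm{Sch}(H) = H\backslash\mathcal T$ of $H\le F_d$ is the quotient of the directed, $\{a_1,\dots,a_d\}$-labeled Cayley tree $\mathcal T$ of $F_d$, rooted at the image $v_1$ of $1$; a reduced word $b_1\cdots b_k$ (with $b_j\in\{a_i^{\pm1}\}$) defines the path from the root following edges with these labels (traversing an $a_i$-edge backwards for $a_i^{-1}$). The core graph $\mathrm{C}(H)$ is the minimal connected subgraph of $\mathrm{Sch}(H)$ containing the root and all cycles (without backtracking) based at the root. For $g=b_1\cdots b_k$ reduced and finite core graphs $\mathfrak g_1=\mathfrak g_2=\mathrm{C}(\Gamma)$: let $k_1$ be the largest $i\in\{0,\dots,k\}$ such that the path from the root of $\mathfrak g_1$ reading $b_1\cdots b_i$ exists inside $\mathfrak g_1$, and $k_2$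 the largest $i$ such that the path from the root of $\mathfrak g_2$ reading $b_k^{-1}b_{k-1}^{-1}\cdots b_{k-i+1}^{-1}$ exists inside $\mathfrak g_2$. The element $g$ is an admissible connector for $\mathfrak g_1$ with $\mathfrak g_2$ if $k_1+k_2<k$; then the initial segment is $b_1\cdots b_{k_1}$, the terminal segment is (the inverse of) $b_{k-k_2+1}\cdots b_k$, and the join segment is the remaining middle subword $b_{k_1+1}\cdots b_{k-k_2}$, of length $J = k-k_1-k_2$. *)

From mathcomp Require Import all_boot.
From mathcomp Require Import boolp.
Set Implicit Arguments. Unset Strict Implicit. Unset Printing Implicit Defensive.

(* a letter (i, b): b = false is a_(i+1), b = true is a_(i+1)^{-1} *)
Definition letter (d : nat) := ('I_d * bool)%type.
Definition word (d : nat) := seq (letter d).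

Definition linv d (x : letter d) : letter d := (x.1, ~~ x.2).

Fixpoint reduced d (w : word d) : bool :=
  match w with
  | x :: ((y :: _) as w') => (y != linv x) && reduced w'
  | _ => true
  end.

Definition push d (x : letter d) (w : word d) : word d :=
  match w with
  | y :: w' => if y == linv x then w' else x :: w
  | [::] => [:: x]
  end.
Definition red d (w : word d) : word d := foldr (@push d) [::] w.

Definition wmul d (u v : word d) : word d := red (u ++ v).
Definition winv d (w : word d) : word d := rev (map (@linv d) w).

Definition wset d := word d -> Prop.

Definition gen d (P : wset d) : wset d :=
  fun w => exists l : seq (word d),
      (forall s, s \in l -> P s \/ P (winv s)) /\ w = red (flatten l).

Definition gen_list d (S : seq (word d)) : wset d := gen (fun w => w \in S).

Definition conjset d (g : word d) (H : wset d) : wset d :=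
  fun w => exists h, H h /\ w = wmul (wmul g h) (winv g).

Definition join2 d (H K : wset d) : wset d := gen (fun w => H w \/ K w).

(** c_H(R) = #{h in H | |h| <= R}; elements of H are reduced words, so |h| = size h *)
Definition cnt d (H : wset d) (R : nat) : nat :=
  \sum_(n < R.+1) \sum_(t : n.-tuple (letter d)) (asbool (H (val t)) : nat).

(** * Core graph C(H) (as a subgraph of Sch(H) = H\T)
   Vertices of Sch(H) are right cosets H u; the edge leaving the vertex H u
   with label x (x a letter, traversed backwards if x = a_i^{-1}) is the
   edge of the tree from u to u x, modulo H.  This edge belongs to the core
   graph iff some cycle without backtracking based at the root (i.e. some
   reduced h in H) traverses it, i.e. h = p x q (as words) with H p = H u
   (or h = p x^{-1} q with H p = H u x; this case is the first one applied
   to h^{-1}). *)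
Definition core_edge d (H : wset d) (u : word d) (x : letter d) : Prop :=
  exists h p q, H h /\ h = p ++ x :: q /\ H (wmul p (winv u)).

(* the path from the root reading w exists inside C(H) *)
Definition in_core d (H : wset d) (w : word d) : Prop :=
  forall j, j < size w -> forall x0, core_edge H (take j w) (nth x0 w j).

(* Write g = a b c, where a and c^-1 are the longest prefixes of g and g^-1 that read
   paths in the core graph of Gamma, and b <> 1 is the join segment, |b| = J.  Every
   element h of Gamma' is the reduced form of c0 g o1 g^-1 e1 ... g oi g^-1 ei with all
   pieces in Gamma, every oj <> 1 and every ej <> 1 except the last.  If a conjugate
   a^-1 w a or c w c^-1 with w in Gamma began with the letter of b or b^-1 next to it, the
   path reading a (resp. c^-1) would extend inside the core graph.  So nothing cancels
   around the 2i copies of b and b^-1: h = red(c0 a) b w1 b^-1 w2 ... b^-1 red(a^-1 ei),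
   whence |h| >= 2iJ and the pieces have total length at most
   |h| + 2i(|a| + |c|) - 2iJ <= R + 2i(|g| - 2J).  Padding the lengths of the 2i+1 pieces
   to a composition of that number and counting the pieces gives the bound. *)

From mathcomp Require Import all_boot.
From mathcomp Require Import boolp.
From mathcomp Require Import zify.
Set Implicit Arguments. Unset Strict Implicit. Unset Printing Implicit Defensive.

(** * Free reduction *)

Section FreeReduction.
Variable d : nat.
Implicit Types (x : letter d) (u v w : word d).

Lemma linvK : involutive (@linv d).
Proof. by case=> i b; rewrite /linv negbK. Qed.

Lemma reduced_tail x w : reduced (x :: w) -> reduced w.
Proof. by case: w => //= y w /andP[]. Qed.

Lemma reduced_push x w : reduced w -> reduced (push x w).
Proof.
case: w => [|y w] //=; case: ifP => [_|/negbT y_x w_red]; first exact: reduced_tail.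
by rewrite /= y_x.
Qed.

Lemma reduced_red w : reduced (red w).
Proof. by elim: w => //= x w; apply: reduced_push. Qed.

Lemma red_id w : reduced w -> red w = w.
Proof.
elim: w => //= x w IHw w_red; rewrite IHw; last exact: reduced_tail w_red.
by case: w w_red {IHw} => //= y w /andP[/negbTE->].
Qed.

Lemma red_idem w : red (red w) = red w.
Proof. exact/red_id/reduced_red. Qed.

Lemma push_linvK x w : reduced w -> push x (push (linv x) w) = w.
Proof.
case: w => [|y w] /=; first by rewrite eqxx.
rewrite linvK; case: ifP => [/eqP-> | _] w_red /=; last by rewrite eqxx.
by case: w w_red => [|z w] //= /andP[/negbTE->].
Qed.

Lemma red_cat u v : red (u ++ v) = foldr (@push d) (red v) u.
Proof. by rewrite /red foldr_cat. Qed.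

Lemma reduced_foldr_push w u : reduced w -> reduced (foldr (@push d) w u).
Proof. by move=> w_red; elim: u => //= x u; apply: reduced_push. Qed.

Lemma foldr_push_red w u : reduced w ->
  foldr (@push d) w (red u) = foldr (@push d) w u.
Proof.
move=> w_red; elim: u => //= x u <-.
have := reduced_red u; case: (red u) => [|y r] //= r_red.
case: ifP => [/eqP-> | _] //=.
by rewrite push_linvK // reduced_foldr_push.
Qed.

Lemma red_catr u v : red (u ++ red v) = red (u ++ v).
Proof. by rewrite !red_cat red_idem. Qed.

Lemma red_catl u v : red (red u ++ v) = red (u ++ v).
Proof. by rewrite !red_cat foldr_push_red // reduced_red. Qed.

Lemma red_cat_red u v : red (red u ++ red v) = red (u ++ v).
Proof. by rewrite red_catl red_catr. Qed.

Lemma eq_red_cat u v v' : red v = red v' -> red (u ++ v) = red (u ++ v').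
Proof. by move=> Ev; rewrite !red_cat Ev. Qed.

Lemma red_mid u v w : red (u ++ red v ++ w) = red (u ++ v ++ w).
Proof. exact/eq_red_cat/red_catl. Qed.

Lemma red_linv u x v : red (u ++ x :: linv x :: v) = red (u ++ v).
Proof. by rewrite !red_cat /= push_linvK // reduced_red. Qed.

Lemma winvK : involutive (@winv d).
Proof. by move=> w; rewrite /winv map_rev revK (mapK linvK). Qed.

Lemma winv_cat u v : winv (u ++ v) = winv v ++ winv u.
Proof. by rewrite /winv map_cat rev_cat. Qed.

Lemma winv_cons x w : winv (x :: w) = winv w ++ [:: linv x].
Proof. by rewrite /winv /= rev_cons cats1. Qed.

Lemma size_winv w : size (winv w) = size w.
Proof. by rewrite size_rev size_map. Qed.

Lemma winv_eq0 w : (winv w == [::]) = (w == [::]).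
Proof. by rewrite -!size_eq0 size_winv. Qed.

Lemma red_cancel_wV u w v : red (u ++ w ++ winv w ++ v) = red (u ++ v).
Proof.
elim: w u v => [|x w IHw] u v //=.
have -> : u ++ x :: w ++ winv (x :: w) ++ v = (u ++ [:: x]) ++ w ++ winv w ++ linv x :: v.
  by rewrite winv_cons -!catA.
by rewrite IHw -catA red_linv.
Qed.

Lemma red_cancel_Vw u w v : red (u ++ winv w ++ w ++ v) = red (u ++ v).
Proof. by rewrite -{2}(winvK w) red_cancel_wV. Qed.

Lemma red_catV w : red (w ++ winv w) = [::].
Proof. by rewrite -[w ++ _]cats0 -catA (red_cancel_wV [::]). Qed.

Definition olast w := ohead (rev w).

Definition no_cancel u v : bool :=
  if (olast u, ohead v) is (Some p, Some q) then q != linv p else true.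

Lemma olast_winv w : olast (winv w) = omap (@linv d) (ohead w).
Proof. by rewrite /olast revK; case: w. Qed.

Lemma ohead_winv w : ohead (winv w) = omap (@linv d) (olast w).
Proof. by rewrite /olast /winv -map_rev; case: (rev w). Qed.

Lemma olast_cons x w : olast (x :: w) = if w is [::] then Some x else olast w.
Proof.
case: w => [|y w] //; rewrite /olast rev_cons.
by case: (rev (y :: w)) (size_rev (y :: w)) => [|z t] //.
Qed.

Lemma ohead_cat u v : u != [::] -> ohead (u ++ v) = ohead u.
Proof. by case: u. Qed.

Lemma eq_no_cancelr u v v' : ohead v = ohead v' -> no_cancel u v = no_cancel u v'.
Proof. by rewrite /no_cancel => ->. Qed.

Lemma eq_no_cancell u u' v : olast u = olast u' -> no_cancel u v = no_cancel u' v.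
Proof. by rewrite /no_cancel => ->. Qed.

Lemma no_cancel_winv u v : no_cancel u v = no_cancel (winv v) (winv u).
Proof.
rewrite /no_cancel olast_winv ohead_winv.
by case: (olast u) => [p|]; case: (ohead v) => [q|] //=; rewrite linvK eq_sym.
Qed.

Lemma no_cancel_last u v p : olast u = Some p -> no_cancel u v = (ohead v != Some (linv p)).
Proof. by rewrite /no_cancel => ->; case: (ohead v) => // q; rewrite (inj_eq (@Some_inj _)). Qed.

Lemma reduced_cons2 x y w : reduced [:: x, y & w] = (y != linv x) && reduced (y :: w).
Proof. by []. Qed.

Lemma reduced_cat u v : reduced (u ++ v) = [&& reduced u, reduced v & no_cancel u v].
Proof.
elim: u => [|x u IHu]; first by case: (reduced v).
case: u IHu => [|y u] IHu; first by case: v {IHu} => [|z v] //=; rewrite andbC.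
rewrite !cat_cons !reduced_cons2 -cat_cons IHu.
by rewrite (@eq_no_cancell (x :: y :: u) (y :: u)) ?olast_cons // !andbA.
Qed.

Lemma reduced_winv w : reduced w -> reduced (winv w).
Proof.
elim: w => // x w IHw w_red; rewrite winv_cons reduced_cat IHw ?(reduced_tail w_red) //=.
rewrite /no_cancel olast_winv; case: w w_red {IHw} => //= y w /andP[y_x _].
by apply: contra y_x => /eqP->; rewrite linvK.
Qed.

Lemma red_winv w : red (winv w) = winv (red w).
Proof.
elim: w => //= x w IHw; rewrite winv_cons -red_catl IHw.
have := reduced_red w; case: (red w) => [|y r] //= r_red.
case: ifP => [/eqP-> | /negbT y_x].
  rewrite winv_cons -catA /= linvK -[[:: _; _]]cats0 red_linv cats0.
  exact/red_id/reduced_winv/(reduced_tail r_red).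
by rewrite -winv_cons red_id // reduced_winv //= y_x.
Qed.

Lemma size_red_catl u w : size (red w) <= size (red (u ++ w)) + size u.
Proof.
rewrite red_cat; elim: u => [|x u IHu] /=; first by rewrite addn0.
case: (foldr _ _ u) IHu => [|y r] /=; last case: ifP => /=; lia.
Qed.

Lemma size_red_catr w u : size (red w) <= size (red (w ++ u)) + size u.
Proof.
rewrite -(size_winv (red (w ++ u))) -(size_winv (red w)) -(size_winv u) -!red_winv winv_cat.
exact: size_red_catl.
Qed.

Lemma size_red_mid u v w : reduced v -> size v <= size (red (u ++ v ++ w)) + size u + size w.
Proof.
move=> v_red; have := size_red_catl u (v ++ w); have := size_red_catr v w.
rewrite red_id //; lia.
Qed.

Lemma red_cat_split u v : reduced u -> reduced v ->
  exists p s q, [/\ u = p ++ s, v = winv s ++ q & red (u ++ v) = p ++ q].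
Proof.
move=> + v_red; elim: u => [|x u IHu] u_red.
  by exists [::], [::], v; rewrite red_id.
have [p [s [q [Eu Ev Ered]]]] := IHu (reduced_tail u_red).
have -> : red ((x :: u) ++ v) = push x (p ++ q) by rewrite -Ered.
clear Ered; rewrite {}Eu in u_red *; case: p u_red => [|p' p] /= u_red.
- case: q Ev => [|z q] Ev; first by exists [:: x], s, [::].
  rewrite /push; case: ifP => [/eqP Ez | _]; last by exists [:: x], s, (z :: q).
  by exists [::], (x :: s), q; rewrite winv_cons -catA Ev Ez.
- move: u_red => /andP[/negbTE-> _]; by exists [:: x, p' & p], s, q.
Qed.

Lemma red_conjK u w : reduced w -> red (u ++ red (winv u ++ w ++ u) ++ winv u) = w.
Proof.
move=> w_red; rewrite red_mid -!catA (red_cancel_wV [::]) -(cats0 (winv u)) red_cancel_wV.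
by rewrite cats0 red_id.
Qed.

Lemma red_conj_eq0 u w : reduced w -> (red (winv u ++ w ++ u) == [::]) = (w == [::]).
Proof.
move=> w_red; apply/eqP/eqP => [E|->]; last by rewrite cat0s -{2}(winvK u) red_catV.
by rewrite -(red_conjK u w_red) E red_catV.
Qed.

Lemma winv_red_conj u w : winv (red (winv u ++ w ++ u)) = red (winv u ++ winv w ++ u).
Proof. by rewrite -red_winv !winv_cat winvK catA. Qed.

End FreeReduction.

(** * Subgroups and edges of the core graph *)

Lemma cat_eq_prefix (T : Type) (p s u w : seq T) :
  p ++ s = u ++ w -> size s <= size w -> p = u ++ take (size w - size s) w.
Proof.
move=> E le_sw; have size_E := congr1 size E; rewrite !size_cat in size_E.
have /(congr1 (take (size p))) := E; rewrite take_size_cat // take_cat ifN; last by lia.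
by have -> : size p - size u = size w - size s by lia.
Qed.

Lemma cat_eq_suffix (T : Type) (p s u w : seq T) :
  p ++ s = u ++ w -> size w <= size s -> s = drop (size p) u ++ w.
Proof.
move=> E le_ws; have size_E := congr1 size E; rewrite !size_cat in size_E.
have /(congr1 (drop (size p))) := E; rewrite drop_size_cat // drop_cat.
case: ifP => // /negbT; rewrite -leqNgt => le_up.
have -> : size p = size u by lia.
by rewrite subnn drop0 drop_size.
Qed.

Section Subgroup.
Variables (d : nat) (P : wset d).
Local Notation G := (gen P).

Lemma gen_reduced w : G w -> reduced w.
Proof. by case=> l [_ ->]; apply: reduced_red. Qed.

Lemma gen_nil : G [::].
Proof. by exists [::]. Qed.

Lemma gen_mul u v : G u -> G v -> G (red (u ++ v)).
Proof.
move=> [l1 [P_l1 ->]] [l2 [P_l2 ->]]; exists (l1 ++ l2); split.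
  by move=> s; rewrite mem_cat => /orP[/P_l1|/P_l2].
by rewrite red_cat_red flatten_cat.
Qed.

Lemma gen_inv w : G w -> G (winv w).
Proof.
move=> [l [P_l ->]]; exists (rev (map (@winv d) l)); split.
  by move=> s; rewrite mem_rev => /mapP[s' /P_l + ->]; rewrite winvK; tauto.
rewrite -red_winv; congr red; elim: l {P_l} => //= s l IHl.
by rewrite winv_cat IHl rev_cons -cats1 flatten_cat /= cats0.
Qed.

Lemma core_edge_coset u u' x :
  core_edge G u' x -> G (red (u' ++ winv u)) -> core_edge G u x.
Proof.
move=> [h [p [q [Gh [Eh Gp]]]]] Gu'u; exists h, p, q; do 2!split => //.
by have := gen_mul Gp Gu'u; rewrite /wmul red_cat_red -catA red_cancel_Vw.
Qed.

(* Either the reduced conjugate starts with [u x], or [u] ends with [v] and the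
   conjugate is also [u' v u'^-1] for a shorter [u'] in the same coset. *)
Lemma core_edge_conj u v x : reduced (u ++ v) -> ohead v = Some x ->
  G (red (u ++ v ++ winv u)) -> core_edge G u x.
Proof.
have [n] := ubnP (size u); elim: n u v => // n IHn u v /ltnSE size_u.
case: v => // x' v uv_red [Ex']; subst x' => G_conj.
have u_red : reduced u by move: uv_red; rewrite reduced_cat => /andP[].
have [p [s [q [Euv Eu Ered]]]] := red_cat_split uv_red (reduced_winv u_red).
case: (ltnP (size s) (size (x :: v))) => [short | long].
  have := cat_eq_prefix (esym Euv) (ltnW short).
  rewrite /= subSn // => Ep; exists (p ++ q), u, (take (size v - size s) v ++ q).
  split; first by rewrite -Ered -catA.
  by rewrite Ep -catA /wmul red_catV; split; last apply: gen_nil.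
have Es := cat_eq_suffix (esym Euv) long.
have [u' Eu'] : exists u', u = u' ++ x :: v.
  by exists (winv q ++ drop (size p) u); rewrite -{1}(winvK u) Eu winv_cat winvK Es catA.
have G_conj' : G (red (u' ++ (x :: v) ++ winv u')).
  by move: G_conj; rewrite Eu' winv_cat -!catA (catA u') red_cancel_wV -catA.
have edge_u' : core_edge G u' x.
  apply: (IHn u' (x :: v)) => //; last by rewrite -Eu'.
  by move: size_u; rewrite Eu' size_cat /=; lia.
apply: core_edge_coset edge_u' _.
have := gen_inv G_conj'; rewrite -red_winv !winv_cat winvK -catA.
by rewrite Eu' winv_cat.
Qed.

Lemma core_edge_conj_head u w x : G w -> reduced u -> no_cancel u [:: x] ->
  ohead (red (winv u ++ w ++ u)) = Some x -> core_edge G u x.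
Proof.
move=> Gw u_red ux Ehead; apply: (core_edge_conj (v := red (winv u ++ w ++ u))) => //.
  by rewrite reduced_cat u_red reduced_red (@eq_no_cancelr _ u _ [:: x]) ?Ehead.
by rewrite red_conjK // gen_reduced.
Qed.

Lemma core_edge_head u w x : G w -> reduced u -> no_cancel u [:: x] ->
  ohead (red (winv u ++ w)) = Some x -> core_edge G u x.
Proof.
move=> Gw u_red ux; case Ehead: (red (winv u ++ w)) => [|x' q] //= [Ex'].
exists w, u, q; split => //; split; last by rewrite /wmul red_catV; apply: gen_nil.
have uq_red : reduced (u ++ red (winv u ++ w)).
  by rewrite reduced_cat u_red reduced_red (@eq_no_cancelr _ u _ [:: x]) ?Ehead ?Ex'.
by rewrite -Ex' -Ehead -(red_id uq_red) red_catr (red_cancel_wV [::]) red_id // gen_reduced.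
Qed.

End Subgroup.

Lemma in_core_take_succ d (H : wset d) w i x0 : i < size w ->
  in_core H (take i w) -> core_edge H (take i w) (nth x0 w i) -> in_core H (take i.+1 w).
Proof.
move=> lt_iw core_i edge_i j; rewrite size_takel // ltnS => le_ji y0.
rewrite nth_take ?ltnS // take_takel ?(leqW le_ji) //.
case: (ltngtP j i) le_ji => // [lt_ji _ | -> _].
  have := core_i j _ y0; rewrite size_takel ?(ltnW lt_iw) // nth_take //.
  by rewrite take_takel ?(ltnW lt_ji) //; apply.
by rewrite (set_nth_default x0 y0 lt_iw).
Qed.

Lemma not_core_edge_max d (H : wset d) w i x0 : i < size w -> in_core H (take i w) ->
  (forall j, j <= size w -> in_core H (take j w) -> j <= i) ->
  ~ core_edge H (take i w) (nth x0 w i).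
Proof.
move=> lt_iw core_i max_i /(in_core_take_succ lt_iw core_i) /(max_i _ lt_iw).
by rewrite ltnn.
Qed.

(** * Normal forms in <Gamma, g Gamma g^-1> *)

(* [alt_prod g [:: c0; o1; e1; ...; oi; ei]] is c0 g o1 g^-1 e1 ... g oi g^-1 ei. *)
Fixpoint alt_prod d (g : word d) (l : seq (word d)) : word d :=
  if l is c :: l' then
    c ++ (if l' is o :: rest then g ++ o ++ winv g ++ alt_prod g rest else [::])
  else [::].

Inductive alt_normal d (G : wset d) : seq (word d) -> Prop :=
| alt_normal1 c : G c -> alt_normal G [:: c]
| alt_normal_cons c o e l : G c -> G o -> o != [::] -> alt_normal G (e :: l) ->
    (l != [::] -> e != [::]) -> alt_normal G [:: c, o, e & l].

Section AltNormal.
Variables (d : nat) (G : wset d).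

Lemma alt_normal_all l : alt_normal G l -> forall w, w \in l -> G w.
Proof.
elim=> [c Gc | c o e rest Gc Go _ _ IHl _] w; first by rewrite inE => /eqP->.
by rewrite !inE => /or3P[/eqP-> | /eqP-> | /IHl].
Qed.

Lemma alt_normal_odd l : alt_normal G l -> odd (size l).
Proof. by elim=> //= *; rewrite negbK. Qed.

Lemma alt_normal_head c c' l : alt_normal G (c :: l) -> G c' -> alt_normal G (c' :: l).
Proof. by move=> l_normal Gc'; inversion l_normal; constructor. Qed.

Lemma alt_normal_consE c o e l : alt_normal G [:: c, o, e & l] ->
  [/\ G o, o != [::], alt_normal G (e :: l) & (l != [::] -> e != [::])].
Proof. by inversion 1. Qed.

End AltNormal.

Section JoinNormalForm.
Variables (d : nat) (P : wset d) (g : word d).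
Local Notation G := (gen P).

Lemma join2_generator s :
  (G s \/ conjset g G s) \/ (G (winv s) \/ conjset g G (winv s)) ->
  G s \/ exists2 t, G t & s = red (g ++ t ++ winv g).
Proof.
rewrite /conjset /wmul; case=> [[Gs | [t [Gt ->]]] | [Gs | [t [Gt Et]]]].
- by left.
- by right; exists t; rewrite // red_catl -catA.
- by left; rewrite -(winvK s); apply: gen_inv.
- right; exists (winv t); first exact: gen_inv.
  by rewrite -(winvK s) Et red_catl -red_winv !winv_cat winvK catA.
Qed.

Lemma alt_normal_mul s l : alt_normal G l -> G s ->
  exists2 l', alt_normal G l' & red (s ++ alt_prod g l) = red (alt_prod g l').
Proof.
case: l => [|c l] l_normal Gs; first by inversion l_normal.
exists (red (s ++ c) :: l); last by rewrite /= red_catl -catA.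
exact: alt_normal_head l_normal (gen_mul Gs (alt_normal_all l_normal (mem_head c l))).
Qed.

Lemma alt_normal_mul_conj t l : alt_normal G l -> G t ->
  exists2 l', alt_normal G l' & red (g ++ t ++ winv g ++ alt_prod g l) = red (alt_prod g l').
Proof.
move=> l_normal Gt; have [-> | t_ne0] := eqVneq t [::].
  by exists l; rewrite // (red_cancel_wV [::]).
case: l l_normal => [|c l] l_normal; first by inversion l_normal.
have prepend : (l != [::] -> c != [::]) -> exists2 l', alt_normal G l' &
    red (g ++ t ++ winv g ++ alt_prod g (c :: l)) = red (alt_prod g l').
  move=> lc; exists [:: [::], t, c & l] => //.
  exact: alt_normal_cons (gen_nil P) Gt t_ne0 l_normal lc.
have [Ec | c_ne0] := eqVneq c [::]; last by apply: prepend.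
case: l l_normal prepend => [|o [|e rest]] l_normal prepend; first exact: prepend.
  by have := alt_normal_odd l_normal.
have [Go _ e_normal e_ne0] := alt_normal_consE l_normal; rewrite {}Ec.
have -> : red (g ++ t ++ winv g ++ alt_prod g [:: [::], o, e & rest])
        = red (g ++ red (t ++ o) ++ winv g ++ alt_prod g (e :: rest)).
  by rewrite red_mid /= (catA g t) red_cancel_Vw -!catA.
have [-> | to_ne0] := eqVneq (red (t ++ o)) [::].
  by exists (e :: rest); rewrite // (red_cancel_wV [::]).
exists [:: [::], red (t ++ o), e & rest] => //.
exact: alt_normal_cons (gen_nil P) (gen_mul Gt Go) to_ne0 e_normal e_ne0.
Qed.

Lemma join2_alt_normal h : join2 G (conjset g G) h ->
  exists2 l, alt_normal G l & h = red (alt_prod g l).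
Proof.
case=> L [L_gen ->]; elim: L L_gen => [|s L IHL] L_gen.
  by exists [:: [::]]; first exact/alt_normal1/gen_nil.
have [l l_normal EL] : exists2 l, alt_normal G l & red (flatten L) = red (alt_prod g l).
  by apply: IHL => s' Ls'; apply: L_gen; rewrite inE Ls' orbT.
rewrite /= -red_catr EL red_catr.
case: (join2_generator (L_gen s (mem_head s L))) => [Gs | [t Gt ->]].
  exact: alt_normal_mul.
by rewrite red_catl -!catA; apply: alt_normal_mul_conj.
Qed.

End JoinNormalForm.

(** * Length of normal forms *)

Section ConnectorLength.
Variables (d : nat) (P : wset d) (a b c : word d) (x x' : letter d).
Local Notation G := (gen P).
Local Notation g := (a ++ b ++ c).
(* [a], [b], [c] are the initial, join and terminal segments of [g]; [x] and [x'] are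
   the first letters of [b] and of [b^-1]. *)
Hypotheses (abc_reduced : reduced g) (b_head : ohead b = Some x).
Hypothesis winvb_head : ohead (winv b) = Some x'.
Hypotheses (a_max : ~ core_edge G a x) (c_max : ~ core_edge G (winv c) x').

Let b_ne0 : b != [::]. Proof. by case: (b) b_head. Qed.

Let b_last : olast b = Some (linv x').
Proof. by move: winvb_head; rewrite ohead_winv; case: (olast b) => // p [<-]; rewrite linvK. Qed.

Let a_red : reduced a.
Proof. by move: abc_reduced; rewrite reduced_cat => /and3P[]. Qed.

Let b_red : reduced b.
Proof. by move: abc_reduced; rewrite !reduced_cat => /and3P[_ /and3P[]]. Qed.

Let c_red : reduced c.
Proof. by move: abc_reduced; rewrite !reduced_cat => /and3P[_ /and3P[]]. Qed.

Let a_x : no_cancel a [:: x].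
Proof.
move: abc_reduced; rewrite reduced_cat => /and3P[_ _].
by rewrite (@eq_no_cancelr _ a _ [:: x]) // ohead_cat ?b_head.
Qed.

Let c_x' : no_cancel (winv c) [:: x'].
Proof.
move: abc_reduced; rewrite !reduced_cat no_cancel_winv => /and3P[_ /and3P[_ _]].
by rewrite (@eq_no_cancelr _ _ _ [:: x']) // winvb_head.
Qed.

Lemma no_cancel_winvb z : no_cancel (winv b) z = (ohead z != Some x).
Proof. by rewrite (@no_cancel_last _ _ _ (linv x)) ?linvK // olast_winv b_head. Qed.

Lemma no_cancel_b z : no_cancel b z = (ohead z != Some x').
Proof. by rewrite (no_cancel_last _ b_last) linvK. Qed.

Lemma ohead_conj_a_neq w : G w -> ohead (red (winv a ++ w ++ a)) != Some x.
Proof. by move=> Gw; apply/eqP => /(core_edge_conj_head Gw a_red a_x). Qed.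

Lemma ohead_mul_a_neq w : G w -> ohead (red (winv a ++ w)) != Some x.
Proof. by move=> Gw; apply/eqP => /(core_edge_head Gw a_red a_x). Qed.

Lemma ohead_conj_c_neq w : G w -> ohead (red (c ++ w ++ winv c)) != Some x'.
Proof.
move=> Gw; apply/eqP; rewrite -{1}(winvK c).
by move=> /(core_edge_conj_head Gw (reduced_winv c_red) c_x').
Qed.

(* Maximality of [a] and [c] rules out cancellation at all four junctions. *)
Lemma red_period o X : G o -> o != [::] -> no_cancel (winv b) (red (winv a ++ X)) ->
  red (winv a ++ g ++ o ++ winv g ++ X)
  = b ++ red (c ++ o ++ winv c) ++ winv b ++ red (winv a ++ X).
Proof.
move=> Go o_ne0 bX; set w := red (c ++ o ++ winv c).
have w_ne0 : w != [::] by rewrite /w -{1}(winvK c) red_conj_eq0 ?(gen_reduced Go).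
have w_winvb : no_cancel w (winv b).
  rewrite no_cancel_winv winvK no_cancel_b /w -{1}(winvK c) winv_red_conj winvK.
  exact/ohead_conj_c_neq/gen_inv.
have rhs_red : reduced (b ++ w ++ winv b ++ red (winv a ++ X)).
  rewrite !reduced_cat b_red reduced_red reduced_winv // bX /w reduced_red -/w /=.
  rewrite (@eq_no_cancelr _ w _ (winv b)) ?ohead_cat ?winv_eq0 // w_winvb.
  by rewrite (@eq_no_cancelr _ b _ w) ?ohead_cat // no_cancel_b ohead_conj_c_neq.
rewrite -(red_id rhs_red) red_mid !catA red_catr -!catA !winv_cat -!catA.
by rewrite (red_cancel_Vw [::]).
Qed.

Lemma alt_tail_bound c0 o rest : alt_normal G [:: c0, o & rest] ->
  let V := red (winv a ++ g ++ o ++ winv g ++ alt_prod g rest) in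
  [/\ ohead V = Some x, (size rest).+1 * size b <= size V &
      sumn (map size (o :: rest)) + (size rest).+1 * size b
      <= size V + (size rest).+1 * size c + size rest * size a].
Proof.
have [m] := ubnP (size rest); elim: m c0 o rest => // m IHm c0 o rest /ltnSE size_rest.
case: rest size_rest => [|e rest] size_rest l_normal; first by have := alt_normal_odd l_normal.
have [Go o_ne0 e_normal e_ne0] := alt_normal_consE l_normal.
have Ge := alt_normal_all e_normal (mem_head e rest).
have size_o := size_red_mid c (winv c) (gen_reduced Go); rewrite size_winv in size_o.
case: rest => [|o' rest] in size_rest l_normal e_normal e_ne0 *.
  rewrite /= cats0 red_period ?no_cancel_winvb ?ohead_mul_a_neq //.
  have := size_red_catl (winv a) e; rewrite red_id ?(gen_reduced Ge) // size_winv => size_e.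
  rewrite /= ohead_cat // b_head !size_cat size_winv; split=> //; clear -size_o size_e; lia.
have [V'_head V'_size V'_sum] := IHm e o' rest (ltnW size_rest) e_normal.
set V' := red _ in V'_head V'_size V'_sum; set w := red (winv a ++ e ++ a).
have w_ne0 : w != [::] by rewrite red_conj_eq0 ?(gen_reduced Ge) ?e_ne0.
have Ew : red (winv a ++ alt_prod g [:: e, o' & rest]) = w ++ V'.
  have wV'_red : reduced (w ++ V').
    rewrite reduced_cat !reduced_red (@eq_no_cancelr _ w V' b) ?V'_head ?b_head //.
    rewrite no_cancel_winv no_cancel_winvb winv_red_conj.
    exact/ohead_conj_a_neq/gen_inv.
  by rewrite -(red_id wV'_red) red_cat_red -!catA (catA (winv a) e) red_cancel_wV /= -!catA.
rewrite [alt_prod _ _]/= red_period ?Ew ?no_cancel_winvb ?ohead_cat ?ohead_conj_a_neq //.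
have := size_red_mid (winv a) a (gen_reduced Ge); rewrite size_winv -/w.
move: V'_sum => /= V'_sum size_e /=.
rewrite ohead_cat // b_head !size_cat size_winv; split=> //.
  by clear -V'_size; lia.
by clear -size_o size_e V'_sum; lia.
Qed.

Lemma alt_normal_size_bound l : alt_normal G l ->
  let h := red (alt_prod g l) in
  (size l).-1 * size b <= size h /\
  sumn (map size l) + (size l).-1 * size b <= size h + (size l).-1 * (size a + size c).
Proof.
case: l => [|c0 [|o rest]] l_normal; first by inversion l_normal.
  by rewrite /= cats0 red_id ?addn0 // (gen_reduced (alt_normal_all l_normal (mem_head _ _))).
have Gc0 := alt_normal_all l_normal (mem_head _ _).
have [V_head V_size V_sum] := alt_tail_bound l_normal.
set V := red _ in V_head V_size V_sum.
have -> : red (alt_prod g [:: c0, o & rest]) = red (c0 ++ a) ++ V.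
  have c0aV_red : reduced (red (c0 ++ a) ++ V).
    rewrite reduced_cat !reduced_red (@eq_no_cancelr _ _ V b) ?V_head ?b_head //.
    rewrite no_cancel_winv no_cancel_winvb -red_winv winv_cat.
    exact/ohead_mul_a_neq/gen_inv.
  by rewrite -(red_id c0aV_red) red_cat_red /= -!catA red_cancel_wV.
have := size_red_catr c0 a; rewrite red_id ?(gen_reduced Gc0) //.
move: V_sum => /= V_sum size_c0; rewrite size_cat.
by split; [clear -V_size | clear -V_sum size_c0]; lia.
Qed.

End ConnectorLength.

Lemma ohead_nth_cat (T : Type) x0 (p u v : seq T) :
  0 < size u -> ohead u = Some (nth x0 (p ++ u ++ v) (size p)).
Proof. by case: u => // y u _; rewrite nth_cat ltnn subnn. Qed.

Lemma connector_split d (g : word d) k1 k2 : k1 + k2 < size g ->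
  exists a b c, [/\ g = a ++ b ++ c, a = take k1 g, winv c = take k2 (winv g),
                   size a = k1 & size c = k2].
Proof.
move=> adm; exists (take k1 g), (drop k1 (take (size g - k2) g)), (drop (size g - k2) g).
rewrite catA -{1}(take_takel g (_ : k1 <= size g - k2)); last by lia.
rewrite cat_take_drop cat_take_drop /winv take_rev size_map map_drop size_takel; last by lia.
by rewrite size_drop subKn //; lia.
Qed.

Lemma join2_alt_normal_bound d (P : wset d) (g : word d) k1 k2 h :
  let k := size g in
  reduced g ->
  in_core (gen P) (take k1 g) -> (forall i, i <= k -> in_core (gen P) (take i g) -> i <= k1) ->
  in_core (gen P) (take k2 (winv g)) ->
  (forall i, i <= k -> in_core (gen P) (take i (winv g)) -> i <= k2) ->
  k1 + k2 < k -> join2 (gen P) (conjset g (gen P)) h ->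
  exists i l, [/\ alt_normal (gen P) l, size l = (2 * i).+1, h = red (alt_prod g l),
    2 * i * (k - k1 - k2) <= size h &
    sumn (map size l) + 2 * i * (k - k1 - k2) <= size h + 2 * i * (k1 + k2)].
Proof.
move=> k g_red k1_core k1_max k2_core k2_max adm /join2_alt_normal[l l_normal ->].
have [a [b [c [Eg Ea Ec size_a size_c]]]] := connector_split adm.
have size_b : size b = k - k1 - k2 by rewrite /k Eg !size_cat; lia.
have b_pos : 0 < size b by lia.
have x0 : letter d by case: (b) b_pos.
have a_max : ~ core_edge (gen P) a (nth x0 g k1).
  by rewrite Ea; apply: not_core_edge_max => //; lia.
have c_max : ~ core_edge (gen P) (winv c) (nth x0 (winv g) k2).
  rewrite Ec; apply: not_core_edge_max => //; first by rewrite size_winv; lia.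
  by move=> j; rewrite size_winv; apply: k2_max.
have b_head := ohead_nth_cat x0 a c b_pos; rewrite -Eg size_a in b_head.
have winvb_pos : 0 < size (winv b) by rewrite size_winv.
have winvb_head := ohead_nth_cat x0 (winv c) (winv a) winvb_pos.
rewrite catA -!winv_cat -Eg size_winv size_c in winvb_head.
have abc_red : reduced (a ++ b ++ c) by rewrite -Eg.
have [i size_l] : exists i, size l = (2 * i).+1.
  by exists (size l)./2; rewrite -[LHS]odd_double_half (alt_normal_odd l_normal) -muln2 mulnC.
have [] := alt_normal_size_bound abc_red b_head winvb_head a_max c_max l_normal.
rewrite -Eg size_l /= => bound_b bound_sum; exists i, l; split=> //; nia.
Qed.

(** * Counting *)

Lemma count_sum (T : Type) (p : pred T) (s : seq T) : count p s = \sum_(x <- s) p x.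
Proof. by elim: s => [|x s IHs]; rewrite ?big_nil ?big_cons //= IHs. Qed.

Lemma size_flatten_map (S T : Type) (f : S -> seq T) (s : seq S) :
  size (flatten (map f s)) = \sum_(x <- s) size (f x).
Proof. by rewrite size_flatten /shape -map_comp sumnE big_map. Qed.

Lemma all2_nth (S T : Type) (r : S -> T -> bool) x0 y0 (s : seq S) (t : seq T) :
  size s = size t -> (forall i, i < size s -> r (nth x0 s i) (nth y0 t i)) -> all2 r s t.
Proof.
elim: s t => [|x s IHs] [|y t] //= [size_st] r_st.
by rewrite (r_st 0) //=; apply: IHs => // i; apply: (r_st i.+1).
Qed.

Definition compositions m T : seq {ffun 'I_m.+1 -> 'I_T.+1} :=
  [seq a : {ffun 'I_m.+1 -> 'I_T.+1} <- index_enum _ | \sum_j (a j : nat) == T].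

Lemma composition_pad m T (s : 'I_m.+1 -> nat) : \sum_j s j <= T ->
  exists2 a, a \in compositions m T & forall j, s j <= a j.
Proof.
move=> le_sT; set S := \sum_j s j in le_sT *.
pose t j := s j + (if j == ord0 then T - S else 0).
have t_lt j : t j < T.+1.
  have le_s_sum : s j <= S by rewrite /S (bigD1 j) //= leq_addr.
  by rewrite ltnS /t; case: eqP => _; lia.
exists [ffun j => Ordinal (t_lt j)] => [|j]; last by rewrite ffunE leq_addr.
rewrite mem_filter mem_index_enum andbT.
have pad_sum : \sum_(j < m.+1) (if j == ord0 then T - S else 0) = T - S.
  by rewrite (bigD1 ord0) //= big1 ?addn0 // => j /negbTE->.
rewrite (eq_bigr t) => [|j _]; last by rewrite ffunE.
by rewrite big_split /= -/S pad_sum subnKC.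
Qed.

Section Counting.
Variable d : nat.
Implicit Types (G H : wset d) (R : nat).

Definition words_upto n : seq (word d) :=
  flatten [seq [seq val t | t <- index_enum (m.-tuple (letter d))] | m <- iota 0 n.+1].

Lemma mem_words_upto n w : (w \in words_upto n) = (size w <= n).
Proof.
apply/flatten_mapP/idP => [[m] | le_wn].
  by rewrite mem_iota add0n => lt_mn /mapP[t _ ->]; rewrite size_tuple.
exists (size w); first by rewrite mem_iota.
by apply/mapP; exists (in_tuple w) => //; apply: mem_index_enum.
Qed.

Lemma uniq_words_upto n : uniq (words_upto n).
Proof.
have uniq_block m : uniq [seq val t | t <- index_enum (m.-tuple (letter d))].
  by rewrite map_inj_uniq ?index_enum_uniq //; apply: val_inj.
elim: n => [|n IHn]; first by rewrite /words_upto /= cats0 uniq_block.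
rewrite /words_upto -addn1 iotaD map_cat flatten_cat /= cats0 cat_uniq IHn uniq_block andbT.
apply/hasPn => _ /mapP[t _ ->]; rewrite mem_words_upto size_tuple; lia.
Qed.

Lemma cnt_count H R : cnt H R = count (fun w => `[< H w >]) (words_upto R).
Proof.
rewrite /words_upto.
have -> : iota 0 R.+1 = index_iota 0 R.+1 by rewrite /index_iota subn0.
rewrite /cnt count_flatten -map_comp sumnE big_map big_mkord.
by apply: eq_bigr => m _ /=; rewrite count_map count_sum.
Qed.

Lemma cnt_le_size H R (U : seq (word d)) :
  (forall h, H h -> size h <= R -> h \in U) -> cnt H R <= size U.
Proof.
move=> HU; rewrite cnt_count -size_filter; apply: uniq_leq_size.
  exact/filter_uniq/uniq_words_upto.
by move=> h; rewrite mem_filter mem_words_upto => /andP[/asboolP]; apply: HU.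
Qed.

Fixpoint bounded_lists G (ns : seq nat) : seq (seq (word d)) :=
  if ns is n :: ns' then
    [seq w :: l | w <- [seq w <- words_upto n | `[< G w >]], l <- bounded_lists G ns']
  else [:: [::]].

Lemma size_bounded_lists G ns : size (bounded_lists G ns) = \prod_(n <- ns) cnt G n.
Proof.
elim: ns => [|n ns IHns]; first by rewrite big_nil.
by rewrite /= size_allpairs IHns big_cons size_filter cnt_count.
Qed.

Lemma mem_bounded_lists G ns l :
  all2 (fun w n => `[< G w >] && (size w <= n)) l ns -> l \in bounded_lists G ns.
Proof.
elim: ns l => [|n ns IHns] [|w l] //= /andP[/andP[Gw le_wn] l_ns].
by apply: (allpairs_f (fun w l => w :: l)); [rewrite mem_filter Gw mem_words_upto | apply: IHns].
Qed.

Lemma cnt_le_compositions H G (F : seq (word d) -> word d) R N (m T : nat -> nat) :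
  (forall h, H h -> size h <= R -> exists (i : 'I_N) (l : seq (word d)),
     [/\ size l = (m i).+1, forall w, w \in l -> G w, sumn (map size l) <= T i & h = F l]) ->
  cnt H R <= \sum_(i < N)
    \sum_(a : {ffun 'I_(m i).+1 -> 'I_(T i).+1} | \sum_(j < (m i).+1) (a j : nat) == T i)
      \prod_(j < (m i).+1) cnt G (a j).
Proof.
move=> cover.
pose pieces i (a : {ffun 'I_(m i).+1 -> 'I_(T i).+1}) :=
  bounded_lists G [seq (a j : nat) | j <- enum 'I_(m i).+1].
pose U := flatten [seq flatten [seq map F (pieces i a) | a <- compositions (m i) (T i)]
                  | i : 'I_N <- index_enum _].
apply: (@leq_trans (size U)); last first.
  rewrite size_flatten_map; apply: leq_sum => i _.
  rewrite size_flatten_map big_filter; apply: leq_sum => a _.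
  by rewrite size_map size_bounded_lists big_map enumT.
apply: cnt_le_size => h Hh le_hR; have [i [l [size_l lG sum_l ->]]] := cover h Hh le_hR.
have [a a_comp le_la] : exists2 a, a \in compositions (m i) (T i) &
    forall j : 'I_(m i).+1, size (nth [::] l j) <= a j.
  apply: composition_pad; apply: leq_trans sum_l.
  by rewrite sumnE big_map (big_nth [::]) big_mkord size_l.
apply/flatten_mapP; exists i; first exact: mem_index_enum.
apply/flatten_mapP; exists a => //.
apply/map_f/mem_bounded_lists/(@all2_nth _ _ _ [::] 0); first by rewrite size_map size_enum_ord.
move=> j lt_jl; rewrite (nth_map ord0) ?size_enum_ord -?size_l //.
apply/andP; split; first exact/asboolP/lG/mem_nth.
have lt_j : j < (m i).+1 by rewrite -size_l.
have -> : nth ord0 (enum 'I_(m i).+1) j = Ordinal lt_j by apply: val_inj; rewrite /= nth_enum_ord.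
exact: le_la.
Qed.

End Counting.

Unset Implicit Arguments.

Theorem lemma2p10 (d : nat) (S : seq (word d)) (g : word d) (k1 k2 : nat) :
  let Gamma := gen_list S in
  let k := size g in
  reduced g ->
  (* k1 = largest i <= k such that b_1...b_i reads a path inside C(Gamma) *)
  k1 <= k -> in_core Gamma (take k1 g) ->
  (forall i, i <= k -> in_core Gamma (take i g) -> i <= k1) ->
  (* k2 = largest i <= k such that b_k^{-1}...b_(k-i+1)^{-1} reads a path in C(Gamma) *)
  k2 <= k -> in_core Gamma (take k2 (winv g)) ->
  (forall i, i <= k -> in_core Gamma (take i (winv g)) -> i <= k2) ->
  (* g is an admissible connector *)
  k1 + k2 < k ->
  let J := k - k1 - k2 in
  let Gamma' := join2 Gamma (conjset g Gamma) in
  forall R : nat,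
    cnt Gamma' R <=
    \sum_(i < (R %/ (2 * J)).+1)
      (* T = R + 2i(|g| - 2J), nonnegative since 2iJ <= R *)
      let T := R + 2 * i * k - 4 * i * J in
      \sum_(a : {ffun 'I_(2 * i).+1 -> 'I_T.+1} | \sum_(j < (2 * i).+1) (a j : nat) == T)
        \prod_(j < (2 * i).+1) cnt Gamma (a j).
Proof.
move=> Gamma k g_red _ k1_core k1_max _ k2_core k2_max adm J Gamma' R.
apply: (@cnt_le_compositions _ _ _ (fun l => red (alt_prod g l)) _ _
          (fun i => 2 * i) (fun i => R + 2 * i * k - 4 * i * J)) => h Gh le_hR.
have [i [l [l_normal size_l Eh bound_b bound_sum]]] :=
  join2_alt_normal_bound g_red k1_core k1_max k2_core k2_max adm Gh.
rewrite -/k -/J in bound_b bound_sum.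
have J_gt0 : 0 < J by rewrite /J; lia.
have lt_iN : i < (R %/ (2 * J)).+1 by rewrite ltnS leq_divRL ?muln_gt0 //; nia.
exists (Ordinal lt_iN), l; split=> //=; first exact: alt_normal_all.
rewrite /J; nia.
Qed.
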